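(* Fix integers $n,k\ge1$ and let $E=\mathbb Z[q]/(\Phi_n(q)^k)$ and $G=\mathbb Z[e_n][x]/(x^k)$. Then: (a) $E$ and $G$ are free $\mathbb Z$-modules of the same rank $k\varphi(n)$. (b) The algebra homomorphism $\mathbb Z[q]\to\mathbb Z[e_n][x]$, $q\mapsto e_n+x$, descends to an algebra homomorphism $h:E\to G$, and $h$ is injective.
   Context: $\Phi_n(q)$ is the $n$th cyclotomic polynomial, $\varphi$ is Euler's totient function, and $e_n=\exp(2\pi i/n)$. *)

From HB Require Import structures.
From Stdlib Require Import ClassicalEpsilon.
From mathcomp Require Import all_boot all_order all_algebra all_field.
Set Implicit Arguments. Unset Strict Implicit. Unset Printing Implicit Defensive.
Import Order.TTheory GRing.Theory Num.Theory.
Local Open Scope ring_scope.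

Definition pbool (P : Prop) : bool :=
  if excluded_middle_informative P then true else false.

Lemma pboolP (P : Prop) : reflect P (pbool P).
Proof. by rewrite /pbool; case: excluded_middle_informative => h; constructor. Qed.

(* e_n = exp(2 pi i / n), realised in algC as the square of n.-root (-1),
   the root of z^n = -1 of least nonnegative argument (pi/n). *)
Definition e_ (n : nat) : algC := (n.-root (-1)) ^+ 2.

Definition Zen_pred (n : nat) : {pred algC} :=
  fun z => pbool (exists p : {poly int}, z = (map_poly intr p).[e_ n]).

Lemma Zen_subring_closed n : subring_closed (Zen_pred n).
Proof.
split.
- apply/pboolP; exists 1; by rewrite rmorph1 hornerC.
- move=> x y /pboolP[p ->] /pboolP[q ->]; apply/pboolP; exists (p - q).
  by rewrite rmorphB hornerD hornerN.
- move=> x y /pboolP[p ->] /pboolP[q ->]; apply/pboolP; exists (p * q).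
  by rewrite rmorphM hornerM.
Qed.

HB.instance Definition _ n :=
  GRing.isSubringClosed.Build algC (Zen_pred n) (Zen_subring_closed n).

Record Zen (n : nat) := ZenOf { zen_val :> algC; _ : zen_val \in Zen_pred n }.

HB.instance Definition _ n := [isSub for @zen_val n].
HB.instance Definition _ n := [Choice of Zen n by <:].
HB.instance Definition _ n := [SubChoice_isSubComNzRing of Zen n by <:].

Lemma e_in_Zen n : e_ n \in Zen_pred n.
Proof. by apply/pboolP; exists 'X; rewrite map_polyX hornerX. Qed.

Definition eZ (n : nat) : Zen n := ZenOf (e_in_Zen n).

Definition E_mod (n k : nat) : {poly int} := 'Phi_n ^+ k.
Definition E_ring (n k : nat) := {poly %/ E_mod n k}.

Definition G_mod (n k : nat) : {poly Zen n} := 'X^k.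
Definition G_ring (n k : nat) := {poly %/ G_mod n k}.

Definition shift_map (n : nat) (p : {poly int}) : {poly Zen n} :=
  (map_poly intr p) \Po ('X + (eZ n)%:P).

Definition free_Zmod_of_rank (V : zmodType) (r : nat) : Prop :=
  exists b : 'I_r -> V, forall v : V,
    exists! c : {ffun 'I_r -> int}, v = \sum_(i < r) b i *~ c i.

From HB Require Import structures.
From mathcomp Require Import all_boot all_order all_algebra all_field.
Import Order.TTheory GRing.Theory Num.Theory.
Import Pdiv.CommonRing Pdiv.RingMonic.
Local Open Scope ring_scope.

(* 1. e_n = (n.-root (-1))^2 is a primitive n-th root of unity; the only
      nontrivial point is that n.-root (-1) (the n-th root of -1 of largest
      real part in the upper half plane) has order exactly 2n.
   2. Hence 'Phi_n is the minimal polynomial of e_n: Z[e_n] has the Z-basis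
      1, e_n, ..., e_n^(phi-1), e_n is a simple root of 'Phi_n, and an integer
      polynomial with a root of order k at e_n is divisible by 'Phi_n^k.
   3. Truncated polynomials of degree < d over a free Z-module of rank r are
      free of rank d * r; this gives (a) for E (over Z) and G (over Z[e_n]).
   4. A ring morphism {poly A} -> S killing a modulus factors through the
      quotient; the shift kills 'Phi_n^k modulo x^k since x divides the shift
      of 'Phi_n. Injectivity of the induced h is step 2 read through the
      inverse shift x |-> x - e_n. *)

Lemma unit_sub1_normK (u : algC) : `|u| = 1 -> `|u - 1| ^+ 2 = 2 - 2 * 'Re u.
Proof.
move=> u1; have uu : u * u^* = 1 by rewrite -normCK u1 expr1n.
rewrite normCK rmorphB /= conjC1 mulrBl !mulrBr uu mulr1 mul1r ReE.
rewrite [2 * _]mulrC divfK ?pnatr_eq0 //.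
rewrite opprB addrA -[2]/(1 + 1) opprD addrA; congr (_ - _).
by rewrite mulr1 addrAC.
Qed.

Lemma N1_neq1 : (-1 : algC) != 1.
Proof. by rewrite -subr_eq0 -opprD oppr_eq0 (_ : 1 + 1 = 2%:R) // pnatr_eq0. Qed.

Lemma prim_root_sum (R : idomainType) t (w : R) (i : 'I_t) :
  t.-primitive_root w ->
  \sum_(j < t) (w ^+ i) ^+ j = if i == 0 :> nat then t%:R else 0.
Proof.
move=> w_prim; case: eqP => [->|i_neq0].
  by under eq_bigr do rewrite expr0 expr1n; rewrite sumr_const card_ord.
have wi_neq1 : w ^+ i != 1.
  rewrite -(prim_order_dvd w_prim); apply: contraL (ltn_ord i) => /dvdn_leq.
  by rewrite -leqNgt lt0n; apply; apply/eqP.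
have := subrX1 (w ^+ i) t.
rewrite exprAC (prim_expr_order w_prim) expr1n subrr => /esym/eqP.
by rewrite mulf_eq0 subr_eq0 (negbTE wi_neq1) => /eqP.
Qed.

Section RootOfMinusOne.
Variable n : nat.
Hypothesis n_gt0 : (0 < n)%N.
Local Notation r := (@nthroot algC n (-1)).

(* Throughout, r = n.-root (-1), chosen by the library among the n-th roots of
   -1 with nonnegative imaginary part as one of maximal real part. *)
Lemma rootN1K : r ^+ n = -1. Proof. exact: rootCK. Qed.

Lemma norm_rootN1 (y : algC) : y ^+ n = -1 -> `|y| = 1.
Proof.
by move=> yn; apply/eqP; rewrite -(pexpr_eq1 n_gt0) // -normrX yn normrN normr1.
Qed.

(* Maximality of 'Re r extends to the lower half plane by conjugation. *)
Lemma rootN1_Re_max (y : algC) : y ^+ n = -1 -> 'Re y <= 'Re r.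
Proof.
move=> yn; have [Im_ge0|Im_lt0] := real_ge0P (Creal_Im y).
  exact: rootC_Re_max.
rewrite -Re_conj; apply: rootC_Re_max => //.
  by rewrite -rmorphXn yn rmorphN1.
by rewrite Im_conj oppr_ge0 ltW.
Qed.

Lemma rootN1_dist1_min (y : algC) : y ^+ n = -1 -> `|r - 1| <= `|y - 1|.
Proof.
move=> yn; rewrite -(ler_pXn2r (isT : (0 < 2)%N)) ?nnegrE ?normr_ge0 //.
rewrite !unit_sub1_normK ?norm_rootN1 ?rootN1K // lerD2l lerN2.
by rewrite ler_pM2l ?ltr0n // rootN1_Re_max.
Qed.

(* If r ^+ m = -1 with m | n and t = n/m > 1, then the t distinct t-th roots
   y_j of r are n-th roots of -1, hence no closer to 1 than r, so the terms of
   \sum_j (r - 1) / (y_j - 1) = t all have norm <= 1; they must all equal 1,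
   i.e. y_j = r for all j, a contradiction. *)
Lemma rootN1_exp_eqN1 m : (0 < m)%N -> (m %| n)%N -> r ^+ m = -1 -> m = n.
Proof.
move=> m_gt0 m_dvd_n rm; set t := (n %/ m)%N.
have n_tm : n = (t * m)%N by rewrite divnK.
have t_gt0 : (0 < t)%N by move: n_gt0; rewrite n_tm muln_gt0 => /andP[].
have [t_le1|t_gt1] := leqP t 1.
  by rewrite n_tm (@anti_leq t 1) ?t_le1 // mul1n.
have [w w_prim] := C_prim_root_exists t_gt0.
pose y (j : 'I_t) := t.-root r * w ^+ j.
have yt j : y j ^+ t = r.
  by rewrite exprMn rootCK // exprAC (prim_expr_order w_prim) expr1n mulr1.
have yn j : y j ^+ n = -1 by rewrite n_tm exprM yt rm.
pose Q (j : 'I_t) := \sum_(i < t) y j ^+ i.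
have yQ j : (y j - 1) * Q j = r - 1 by rewrite -subrX1 yt.
have r_neq1 : r - 1 != 0.
  by rewrite subr_eq0; apply: contra N1_neq1 => /eqP r1; rewrite -rootN1K r1 expr1n.
have Q_le1 j : `|Q j| <= 1.
  have yj_neq1 : 0 < `|y j - 1|.
    by rewrite normr_gt0; apply: contraNneq r_neq1 => y1; rewrite -(yQ j) y1 mul0r.
  by rewrite -(ler_pM2l yj_neq1) mulr1 -normrM yQ rootN1_dist1_min.
have sumQ : \sum_j Q j = \sum_(j < t) 1.
  rewrite sumr_const card_ord /Q exchange_big /=.
  under eq_bigr => i _ do under eq_bigr => j _ do
    rewrite exprMn -exprM mulnC exprM.
  under eq_bigr => i _ do rewrite -mulr_sumr prim_root_sum //.
  rewrite (bigD1 (Ordinal t_gt0)) //= expr0 mul1r big1 ?addr0 // => i.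
  by rewrite -val_eqE /= => /negPf ->; rewrite mulr0.
have y_eq_r j : y j = r.
  have := yQ j; rewrite (normC_sum_upper (fun j _ => Q_le1 j) sumQ) // mulr1.
  exact: addIr.
have := y_eq_r (Ordinal t_gt1); rewrite -(y_eq_r (Ordinal t_gt0)) /y /=.
rewrite expr0 mulr1 expr1 -{2}(mulr1 (t.-root r)) => /mulfI.
rewrite !rootC_eq0 // oppr_eq0 oner_eq0 => /(_ isT) w1.
by have := prim_order_dvd w_prim 1; rewrite expr1 w1 eqxx dvdn1 gtn_eqF.
Qed.

(* n.-root (-1) is a primitive 2n-th root of unity: its order d divides 2n but
   not n, so d = 2m with r ^+ m = -1 and m | n, whence m = n. *)
Lemma rootN1_prim : (2 * n).-primitive_root r.
Proof.
have r2n : r ^+ (2 * n) = 1 by rewrite mulnC exprM rootN1K sqrrN expr1n.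
have n2_gt0 : (0 < 2 * n)%N by rewrite muln_gt0 n_gt0.
have [d r_prim d_dvd] := prim_order_exists n2_gt0 r2n.
have d_ndvd_n : ~~ (d %| n)%N by rewrite (prim_order_dvd r_prim) rootN1K N1_neq1.
have d_even : ~~ odd d.
  apply: contra d_ndvd_n => d_odd.
  by rewrite -(@Gauss_dvdr d 2 n) ?coprimen2 ?d_dvd.
have d_2m : d = (2 * d./2)%N.
  by rewrite mul2n -{1}(odd_double_half d) (negbTE d_even).
have m_gt0 : (0 < d./2)%N.
  by rewrite -(ltn_pmul2l (isT : (0 < 2)%N)) -d_2m (prim_order_gt0 r_prim).
have m_dvd_n : (d./2 %| n)%N.
  by rewrite -(@dvdn_pmul2l 2) // -d_2m (prim_order_dvd r_prim) r2n.
have rm : r ^+ d./2 = -1.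
  have : (r ^+ d./2) ^+ 2 == 1 by rewrite -exprM mulnC -d_2m prim_expr_order.
  rewrite sqrf_eq1 -(prim_order_dvd r_prim) => /orP[/(dvdn_leq m_gt0)|/eqP //].
  by rewrite {1}d_2m -{2}(mul1n d./2) leq_pmul2r.
by rewrite d_2m (rootN1_exp_eqN1 _ m_gt0 m_dvd_n rm) in r_prim.
Qed.

End RootOfMinusOne.

Lemma e_prim n : (0 < n)%N -> n.-primitive_root (e_ n).
Proof.
move=> n_gt0; have := exp_prim_root (rootN1_prim _ n_gt0) 2.
by rewrite gcdnMr mulKn.
Qed.

Definition is_Zbasis {V : zmodType} {I : finType} (b : I -> V) : Prop :=
  (forall v, exists c : I -> int, v = \sum_i b i *~ c i) /\
  (forall c : I -> int, \sum_i b i *~ c i = 0 -> forall i, c i = 0).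

Lemma Zbasis_free (V : zmodType) (I : finType) (b : I -> V) :
  is_Zbasis b -> free_Zmod_of_rank V #|I|.
Proof.
move=> [b_span b_free].
have reindex (F : I -> V) : \sum_i F i = \sum_(k < #|I|) F (enum_val k).
  exact: (big_enum_val (A := predT)).
exists (fun k => b (enum_val k)) => v; have [c ->] := b_span v.
exists [ffun k => c (enum_val k)]; split.
  by rewrite reindex; apply: eq_bigr => k _; rewrite ffunE.
move=> c' c'_rep; apply/ffunP => k; rewrite ffunE.
suff /(_ (enum_val k)) : forall i, c i - c' (enum_rank i) = 0.
  by rewrite enum_valK => /eqP; rewrite subr_eq0 => /eqP.
apply: b_free; under eq_bigr do rewrite mulrzBr.
rewrite sumrB c'_rep reindex; apply/eqP; rewrite subr_eq0; apply/eqP.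
by apply: eq_bigr => k' _; rewrite enum_valK.
Qed.

Lemma free_Zbasis (V : zmodType) r :
  free_Zmod_of_rank V r -> exists b : 'I_r -> V, is_Zbasis b.
Proof.
move=> [b b_uniq]; exists b; split=> [v|c c_rep i].
  by have [c [-> _]] := b_uniq v; exists c.
have [c0 [_ c0_uniq]] := b_uniq 0.
have rep_c : 0 = \sum_i b i *~ [ffun j => c j] i.
  by rewrite -[LHS]c_rep; apply: eq_bigr => j _; rewrite ffunE.
have rep_0 : 0 = \sum_i b i *~ [ffun=> 0 : int] i.
  by rewrite big1 // => j _; rewrite ffunE mulr0z.
have := c0_uniq _ rep_c; rewrite (c0_uniq _ rep_0) => /ffunP/(_ i).
by rewrite !ffunE.
Qed.

Section TruncatedPolyBasis.
Variables (R : nzRingType) (d : nat) (I : finType) (f : I -> R).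

Definition npoly_basis (p : 'I_d * I) : {poly_d R} :=
  npolyp d ((f p.2)%:P * 'X^(p.1)).

Lemma coef_npoly_basis_comb (c : 'I_d * I -> int) m (m_lt_d : (m < d)%N) :
  (\sum_p npoly_basis p *~ c p : {poly_d R})`_m
    = \sum_j f j *~ c (Ordinal m_lt_d, j).
Proof.
rewrite (raddf_sum (polyn (n:=d))) coef_sum.
under eq_bigr => p _ do
  rewrite (raddfMz (polyn (n:=d))) coefMrz /= coef_npolyp m_lt_d coefCM coefXn.
pose F (i : 'I_d) (j : I) := (f j * (m == i)%:R) *~ c (i, j).
transitivity (\sum_(p : 'I_d * I) F p.1 p.2); first by apply: eq_bigr => -[i j] _.
rewrite -[LHS](pair_big predT predT F) /= /F (bigD1 (Ordinal m_lt_d)) //=.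
rewrite [X in _ + X]big1 ?addr0 => [|i].
  by apply: eq_bigr => j _; rewrite eqxx mulr1.
move=> /negPf; rewrite -val_eqE /= eq_sym => ->.
by apply: big1 => j _; rewrite mulr0 mul0rz.
Qed.

Lemma npoly_Zbasis : is_Zbasis f -> is_Zbasis npoly_basis.
Proof.
move=> [f_span f_free]; split=> [v|c c_rep [i j]].
  have /fin_all_exists[c c_coef] := fun i : 'I_d => f_span (v : {poly R})`_i.
  exists (fun p => c p.1 p.2); apply/npolyP => m.
  have [m_lt_d|m_ge_d] := ltnP m d; last by rewrite !big_coef_npoly.
  by rewrite coef_npoly_basis_comb (c_coef (Ordinal m_lt_d)).
have := coef_npoly_basis_comb c _ (ltn_ord i); rewrite c_rep coef0.
by move=> /esym/f_free/(_ j); rewrite (_ : Ordinal _ = i) //; apply: val_inj.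
Qed.

End TruncatedPolyBasis.

Lemma npoly_free (R : nzRingType) d r :
  free_Zmod_of_rank R r -> free_Zmod_of_rank {poly_d R} (d * r).
Proof.
move=> /free_Zbasis[f /(@npoly_Zbasis _ d _ _)/Zbasis_free].
by rewrite card_prod !card_ord.
Qed.

Section CyclotomicAtE.
Variable n : nat.
Hypothesis n_gt0 : (0 < n)%N.
Local Notation e := (e_ n).
Local Notation phi := (totient n).
Local Notation mapC := (map_poly (intr : int -> algC)).

(* e is a root of 'Phi_n, whose complex image is the cyclotomic polynomial of e. *)
Lemma Phi_root : root (mapC 'Phi_n) e.
Proof.
by rewrite (Cintr_Cyclotomic (e_prim _ n_gt0)) root_cyclotomic (e_prim _ n_gt0).
Qed.

(* 'Phi_n is the minimal polynomial of e: no nonzero integer polynomial of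
   degree < phi vanishes at e. *)
Lemma small_poly_root_eq0 (q : {poly int}) :
  (size q <= phi)%N -> root (mapC q) e -> q = 0.
Proof.
have [pf [Dpf _] pf_dvd] := minCpolyP e.
have size_pf : size pf = phi.+1.
  rewrite -(size_map_inj_poly (f := ratr : rat -> algC)) ?rmorph0 //;
    last exact: fmorph_inj.
  by rewrite -Dpf (minCpoly_cyclotomic (e_prim _ n_gt0)) size_cyclotomic.
move=> size_q q_root; apply/eqP; apply: contraT => q_neq0.
pose qQ := map_poly (intr : int -> rat) q.
have size_qQ : size qQ = size q by rewrite size_map_inj_poly //; exact: intr_inj.
have qQ_neq0 : qQ != 0 by rewrite -size_poly_eq0 size_qQ size_poly_eq0.
have : pf %| qQ.
  rewrite -pf_dvd -map_poly_comp (eq_map_poly (fun x => ratr_int _ x)) //.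
move/(dvdp_leq qQ_neq0); rewrite size_pf size_qQ => /leq_trans/(_ size_q).
by rewrite ltnn.
Qed.

Lemma horner_rmodp_Phi (a : {poly int}) :
  (mapC (rmodp a 'Phi_n)).[e] = (mapC a).[e].
Proof.
rewrite [in RHS](rdivp_eq (Cyclotomic_monic n) a) rmorphD rmorphM hornerD hornerM.
by rewrite (rootP Phi_root) mulr0 add0r.
Qed.

Lemma size_rmodp_Phi (a : {poly int}) : (size (rmodp a 'Phi_n) <= phi)%N.
Proof.
rewrite -ltnS -size_Cyclotomic ltn_rmodpN0 // monic_neq0 //.
exact: Cyclotomic_monic.
Qed.

Lemma Phi_dvd_of_root (a : {poly int}) :
  root (mapC a) e -> exists b, a = b * 'Phi_n.
Proof.
move=> a_root; exists (rdivp a 'Phi_n).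
rewrite [LHS](rdivp_eq (Cyclotomic_monic n) a) [X in _ + X]small_poly_root_eq0 ?addr0 //.
  exact: size_rmodp_Phi.
by rewrite /root horner_rmodp_Phi.
Qed.

Lemma val_Zen_comb (c : 'I_phi -> int) :
  val (\sum_(j < phi) eZ n ^+ j *~ c j)
    = (mapC (\poly_(i < phi) oapp c 0 (insub i))).[e].
Proof.
rewrite rmorph_sum (horner_coef_wide _ (n := phi)); last first.
  by rewrite size_map_inj_poly ?size_poly //; exact: intr_inj.
apply: eq_bigr => i _.
by rewrite rmorphMz rmorphXn coef_map coef_poly ltn_ord valK /= mulrzl.
Qed.

Lemma Zen_Zbasis : is_Zbasis (fun j : 'I_phi => eZ n ^+ j).
Proof.
split=> [z|c /(congr1 val)].
  case: z => z z_in; have /pboolP[a z_def] := z_in; set q := rmodp a 'Phi_n.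
  exists (fun j : 'I_phi => q`_j); apply: val_inj.
  rewrite val_Zen_comb /= z_def -(horner_rmodp_Phi a).
  congr (_.[_]); congr (map_poly _ _); apply/polyP => i; rewrite coef_poly.
  case: ltnP => [i_lt|i_ge]; first by rewrite insubT.
  by rewrite nth_default // (leq_trans (size_rmodp_Phi a) i_ge).
rewrite val_Zen_comb /= => /rootP comb_root j.
have /polyP/(_ j) := small_poly_root_eq0 _ (size_poly _ _) comb_root.
by rewrite coef_poly ltn_ord valK coef0.
Qed.

Lemma Zen_free : free_Zmod_of_rank (Zen n) phi.
Proof. by move: Zen_Zbasis => /Zbasis_free; rewrite card_ord. Qed.

(* e is a simple root of 'Phi_n, since 'Phi_n divides the separable 'X^n - 1. *)
Lemma Phi_simple_root :
  exists2 S : {poly algC}, mapC 'Phi_n = S * ('X - e%:P) & ~~ root S e.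
Proof.
have /factor_theorem [S Phi_fac] := Phi_root; exists S => //.
have : separable_poly (mapC 'Phi_n).
  apply: (@dvdp_separable _ ('X^n - 1)); last first.
    by apply: separable_Xn_sub_1; rewrite pnatr_eq0 -lt0n.
  rewrite (Cintr_Cyclotomic (e_prim _ n_gt0)) -(factor_Xn_sub_1 (e_prim _ n_gt0)).
  by rewrite big_mkord (bigID (fun k : 'I_n => coprime k n)) /= dvdp_mulIl.
by rewrite Phi_fac separable_root => /andP[].
Qed.

Lemma Phi_pow_dvd k (a : {poly int}) :
  ('X - e%:P) ^+ k %| mapC a -> exists b, a = b * 'Phi_n ^+ k.
Proof.
have [S Phi_fac S_e] := Phi_simple_root.
elim: k a => [|k IHk] a dvd_a; first by exists a; rewrite expr0 mulr1.
have [a1 a_def] : exists a1, a = a1 * 'Phi_n.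
  apply: Phi_dvd_of_root; rewrite root_factor_theorem.
  by apply: dvdp_trans dvd_a; rewrite exprS dvdp_mulr.
have [b a1_def] : exists b, a1 = b * 'Phi_n ^+ k.
  apply: IHk; move: dvd_a.
  rewrite a_def [mapC (_ * _)]rmorphM /= Phi_fac mulrA exprSr.
  rewrite dvdp_mul2r ?polyXsubC_eq0 //.
  by rewrite Gauss_dvdpl // coprimep_expl // coprimep_sym coprimep_XsubC.
by exists b; rewrite a_def a1_def exprSr mulrA.
Qed.

End CyclotomicAtE.

Section QpolyLift.
Variables (A : comNzRingType) (S : nzRingType) (m : {poly A}).
Variable g : {rmorphism {poly A} -> S}.
Hypothesis g_m : g (mk_monic m) = 0.

Lemma rmorph_rmodp p : g (rmodp p (mk_monic m)) = g p.
Proof.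
by rewrite [in RHS](rdivp_eq (monic_mk_monic m) p) rmorphD rmorphM g_m mulr0 add0r.
Qed.

Definition qpoly_lift (x : {poly %/ m}) : S := g (val x).

Fact qpoly_lift_is_zmod_morphism : zmod_morphism qpoly_lift.
Proof. by move=> x y; rewrite /qpoly_lift -rmorphB. Qed.

Fact qpoly_lift_is_monoid_morphism : monoid_morphism qpoly_lift.
Proof.
split=> [|x y]; rewrite /qpoly_lift /=; first by rewrite polyC1 rmorph1.
by rewrite rmorph_rmodp rmorphM.
Qed.

Definition qpoly_lift_rmorphism : {rmorphism {poly %/ m} -> S} :=
  HB.pack qpoly_lift
    (GRing.isZmodMorphism.Build _ _ _ qpoly_lift_is_zmod_morphism)
    (GRing.isMonoidMorphism.Build _ _ _ qpoly_lift_is_monoid_morphism).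

Lemma qpoly_liftE p : qpoly_lift_rmorphism (in_qpoly m p) = g p.
Proof. exact: rmorph_rmodp. Qed.

End QpolyLift.

HB.instance Definition _ n := GRing.RMorphism.copy (shift_map n)
  (comp_poly ('X + (eZ n)%:P) \o map_poly (intr : int -> Zen n)).

Section Shift.
Variable n : nat.
Local Notation e := (e_ n).
Local Notation mapC := (map_poly (intr : int -> algC)).

Lemma map_shift p :
  map_poly val (shift_map n p) = mapC p \Po ('X + e%:P).
Proof.
pose vZ : {rmorphism Zen n -> algC} := val.
rewrite /shift_map (map_comp_poly vZ) rmorphD /= (map_polyX vZ) (map_polyC vZ).
congr (_ \Po _); rewrite -(map_poly_comp vZ).
by apply: eq_map_poly => x; exact: (rmorph_int vZ).
Qed.

Hypothesis n_gt0 : (0 < n)%N.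

(* The shift of 'Phi_n vanishes at x = 0 because 'Phi_n(e) = 0. *)
Lemma shift_Phi : exists q, shift_map n 'Phi_n = q * 'X.
Proof.
suff /factor_theorem [q ->] : root (shift_map n 'Phi_n) 0 by exists q; rewrite subr0.
pose vZ : {rmorphism Zen n -> algC} := val.
apply/eqP/val_inj; rewrite -(horner_map vZ) map_shift horner_comp !hornerE /=.
exact/rootP/Phi_root.
Qed.

End Shift.

Section Proposition10.
Variables n k : nat.
Hypotheses (n_gt0 : (0 < n)%N) (k_gt0 : (0 < k)%N).
Local Notation phi := (totient n).

(* 'Phi_n^k is monic of degree k * phi, so it is its own mk_monic. *)
Lemma E_mod_monic : E_mod n k \is monic.
Proof. exact/monic_exp/Cyclotomic_monic. Qed.

Lemma size_E_mod : size (E_mod n k) = (k * phi).+1.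
Proof.
have := size_exp 'Phi_n k; rewrite size_Cyclotomic /= mulnC => <-.
by rewrite prednK // size_poly_gt0 monic_neq0 // E_mod_monic.
Qed.

Lemma mk_monic_E_mod : mk_monic (E_mod n k) = E_mod n k.
Proof.
by rewrite /mk_monic size_E_mod ltnS muln_gt0 k_gt0 totient_gt0 n_gt0 E_mod_monic.
Qed.

Lemma E_free : free_Zmod_of_rank (E_ring n k) (k * phi).
Proof.
have int_free : free_Zmod_of_rank int 1.
  have := @Zbasis_free int 'I_1 (fun=> 1); rewrite card_ord; apply; split=> [x|c].
    by exists (fun=> x); rewrite big_ord1 intz.
  by rewrite big_ord1 intz => c0 j; rewrite ord1.
have := @npoly_free _ (size (mk_monic (E_mod n k))).-1 _ int_free.
by rewrite [in X in free_Zmod_of_rank _ X]mk_monic_E_mod size_E_mod muln1.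
Qed.

Lemma G_free : free_Zmod_of_rank (G_ring n k) (k * phi).
Proof.
have := @npoly_free _ (size (mk_monic (G_mod n k))).-1 _ (Zen_free _ n_gt0).
by rewrite [in X in free_Zmod_of_rank _ X]mk_monic_Xn size_polyXn prednK.
Qed.

(* The shift followed by reduction modulo x^k kills Phi_n^k, since x divides
   the shift of Phi_n. *)
Lemma shift_E_mod : (in_qpoly (G_mod n k) \o shift_map n) (mk_monic (E_mod n k)) = 0.
Proof.
have [q Phi_shift] := shift_Phi _ n_gt0.
apply: val_inj; rewrite /= mk_monic_E_mod rmorphXn /= Phi_shift exprMn.
by rewrite /G_mod mk_monic_Xn prednK // rmodp_mull // monicXn.
Qed.

Definition h_map : {rmorphism E_ring n k -> G_ring n k} :=
  @qpoly_lift_rmorphism _ _ _ (in_qpoly (G_mod n k) \o shift_map n) shift_E_mod.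

(* (b): a kernel element is reduced modulo Phi_n^k, while its image vanishing
   means e is a root of order k, forcing divisibility by Phi_n^k. *)
Lemma h_map_inj : injective h_map.
Proof.
apply: raddf_inj => x hx0; set a := val x.
have size_a : (size a < size (E_mod n k))%N.
  by rewrite -[in X in (_ < X)%N]mk_monic_E_mod size_mk_monic.
have [B shift_a] : exists B, shift_map n a = B * 'X^k.
  apply/rdvdpP; first exact: monicXn.
  by move: (congr1 val hx0); rewrite /= /G_mod mk_monic_Xn prednK // => /eqP.
have dvd_a : ('X - (e_ n)%:P) ^+ k %| map_poly intr a.
  rewrite -(comp_polyXaddC_K (map_poly intr a) (e_ n)) -map_shift shift_a.
  pose vZ : {rmorphism Zen n -> algC} := val.
  rewrite [map_poly _ (B * _)]rmorphM /= (map_polyXn vZ) comp_polyM.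
  by rewrite comp_Xn_poly dvdp_mulIr.
have [b a_def] := Phi_pow_dvd _ n_gt0 _ _ dvd_a.
apply: val_inj; rewrite -/a -(rmodp_small size_a) a_def rmodp_mull //.
exact: E_mod_monic.
Qed.

End Proposition10.

Theorem proposition10 (n k : nat) (hn : (1 <= n)%N) (hk : (1 <= k)%N) :
  (free_Zmod_of_rank (E_ring n k) (k * totient n) /\
   free_Zmod_of_rank (G_ring n k) (k * totient n)) /\
  (exists h : {rmorphism E_ring n k -> G_ring n k},
     (forall p : {poly int},
        h (in_qpoly (E_mod n k) p) = in_qpoly (G_mod n k) (shift_map n p))
     /\ injective h).
Proof.
split; first by split; [exact: E_free | exact: G_free].
exists (h_map _ _ hn hk); split; first exact: qpoly_liftE.
exact: h_map_inj.
Qed.
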